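(* Let $A,B,X$ be finite-dimensional real inner product spaces and $\alpha:A\to X$, $\beta:B\to X$ Riemannian submersions. Then there exists an inner product on the fiber product $C=A\times_{\alpha,\beta}B=\{(a,b)\in A\times B:\alpha(a)=\beta(b)\}$ such that both projections $\pi_A:C\to A$ and $\pi_B:C\to B$ are Riemannian submersions.
   Context: A linear surjection $T:E\to F$ between finite-dimensional inner product spaces is a Riemannian submersion if its restriction to $(\ker T)^\perp$ is an isometry onto $F$. *)

From HB Require Import structures.
From mathcomp Require Import all_boot all_order all_algebra.
Set Implicit Arguments. Unset Strict Implicit. Unset Printing Implicit Defensive.
Import Order.TTheory GRing.Theory Num.Theory.
Local Open Scope ring_scope.

Definition is_inner_product (R : realFieldType) (V : lmodType R)
  (ip : V -> V -> R) : Prop :=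
  [/\ forall (a : R) (u v w : V), ip (a *: u + v) w = a * ip u w + ip v w,
      forall u v : V, ip u v = ip v u
    & forall u : V, u != 0 -> 0 < ip u u].

Definition in_ker_perp (R : realFieldType) (U V : lmodType R)
  (ipU : U -> U -> R) (T : U -> V) (u : U) : Prop :=
  forall k : U, T k = 0 -> ipU u k = 0.

Definition riemannian_submersion (R : realFieldType) (U V : lmodType R)
  (ipU : U -> U -> R) (ipV : V -> V -> R) (T : U -> V) : Prop :=
  [/\ linear T,
      forall y : V, exists x : U, T x = y,
      forall u v : U, in_ker_perp ipU T u -> in_ker_perp ipU T v ->
        ipV (T u) (T v) = ipU u v
    & forall y : V, exists2 u : U, in_ker_perp ipU T u & T u = y].

Definition fiber_space (R : fieldType) (A B X : vectType R)
  (alpha : {linear A -> X}) (beta : {linear B -> X}) : {vspace (A * B)%type} :=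
  lker (linfun (fun p : A * B => alpha p.1 - beta p.2)).

Definition fiber_prod (R : fieldType) (A B X : vectType R)
  (alpha : {linear A -> X}) (beta : {linear B -> X}) : vectType R :=
  subvs_of (fiber_space alpha beta).

Arguments fiber_space [R A B X] alpha beta.
Arguments fiber_prod [R A B X] alpha beta.

Definition proj_A (R : fieldType) (A B X : vectType R)
  (alpha : {linear A -> X}) (beta : {linear B -> X}) :
  fiber_prod alpha beta -> A := fun c => (vsval c).1.

Definition proj_B (R : fieldType) (A B X : vectType R)
  (alpha : {linear A -> X}) (beta : {linear B -> X}) :
  fiber_prod alpha beta -> B := fun c => (vsval c).2.

Arguments proj_A [R A B X] alpha beta _.
Arguments proj_B [R A B X] alpha beta _.

From HB Require Import structures.
From mathcomp Require Import all_boot all_order all_algebra ring.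
Import Order.TTheory GRing.Theory Num.Theory.
Local Open Scope ring_scope.
Set Implicit Arguments. Unset Strict Implicit.

(* Given Riemannian submersions alpha : A -> X and beta : B -> X, the fiber
   product C = {(a, b) | alpha a = beta b} carries the form
       <c, d>_C = <a_c, a_d>_A + <b_c, b_d>_B - <alpha a_c, alpha a_d>_X.
   It is positive definite because a submersion is norm-nonincreasing,
   |alpha a| <= |a| (orthogonal decomposition of a along ker alpha), so
   <c, c>_C >= <b_c, b_c>_B, and <c, c>_C = <a_c, a_c>_A when b_c = 0.
   The projection to A is a Riemannian submersion: lifting the horizontal
   lift of alpha a through beta gives a horizontal lift in C, and on
   horizontal vectors the B- and X-terms cancel by the isometry of beta.
   Since alpha a_c = beta b_c, the form is symmetric in the roles of A and B,
   which gives the statement for the projection to B. *)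

Section InnerProductFacts.
Variables (R : realFieldType) (V : lmodType R) (ip : V -> V -> R).
Hypothesis hip : is_inner_product ip.

Lemma ipDl u v w : ip (u + v) w = ip u w + ip v w.
Proof. by case: hip => lin _ _; rewrite -{1}[u]scale1r lin mul1r. Qed.

Lemma ipDr u v w : ip w (u + v) = ip w u + ip w v.
Proof. by case: (hip) => _ sym _; rewrite !(sym w) ipDl. Qed.

Lemma ip0l w : ip 0 w = 0.
Proof. by apply: (addrI (ip 0 w)); rewrite -ipDl !addr0. Qed.

Lemma ip0r w : ip w 0 = 0.
Proof. by case: hip => _ sym _; rewrite sym ip0l. Qed.

Lemma ip_gt0 u : u != 0 -> 0 < ip u u.
Proof. by case: hip => _ _; apply. Qed.

Lemma ip_ge0 u : 0 <= ip u u.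
Proof. by have [->|/ip_gt0/ltW //] := eqVneq u 0; rewrite ip0l. Qed.

End InnerProductFacts.

Lemma riemannian_submersion_ext (R : realFieldType) (U V : lmodType R)
    (ipU ipU' : U -> U -> R) (ipV : V -> V -> R) (T : U -> V) :
  (forall u v, ipU u v = ipU' u v) ->
  riemannian_submersion ipU ipV T -> riemannian_submersion ipU' ipV T.
Proof.
move=> eU [lin surj iso lift].
have perpE u : in_ker_perp ipU T u <-> in_ker_perp ipU' T u.
  by split=> pu k Tk; [rewrite -eU | rewrite eU]; apply: pu.
split=> // [u v /perpE pu /perpE pv|y]; first by rewrite -eU iso.
by have [u /perpE pu Tu] := lift y; exists u.
Qed.

(* A Riemannian submersion does not increase lengths: writing
   a = (a - u) + u with u the horizontal lift of T a, Pythagoras gives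
   |a|^2 = |a - u|^2 + |u|^2 >= |u|^2 = |T a|^2. *)
Lemma submersion_norm_le (R : realFieldType) (U V : lmodType R)
    (ipU : U -> U -> R) (ipV : V -> V -> R) (T : {linear U -> V}) :
  is_inner_product ipU -> riemannian_submersion ipU ipV T ->
  forall a, ipV (T a) (T a) <= ipU a a.
Proof.
move=> hU [_ _ iso lift] a.
have [u pu Tu] := lift (T a).
have Tk : T (a - u) = 0 by rewrite linearB Tu subrr.
have sym : forall x y, ipU x y = ipU y x by case: hU.
have pythagoras k : T k = 0 -> ipU (k + u) (k + u) = ipU k k + ipU u u.
  move=> Tk0; rewrite (ipDl hU) !(ipDr hU) (sym k u) (pu _ Tk0).
  by rewrite addr0 add0r.
by rewrite -Tu iso // -(subrK u a) pythagoras // lerDr ip_ge0.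
Qed.

Section PullbackInnerProduct.
Variables (R : realFieldType) (C A B X : lmodType R).
Variables (ipA : A -> A -> R) (ipB : B -> B -> R) (ipX : X -> X -> R).
Variables (p : {linear C -> A}) (q : {linear C -> B}).
Variables (alpha : {linear A -> X}) (beta : {linear B -> X}).
Hypotheses (hipA : is_inner_product ipA) (hipB : is_inner_product ipB).
Hypothesis hipX : is_inner_product ipX.
Hypothesis square : forall c, alpha (p c) = beta (q c).
Hypothesis lift : forall a b, alpha a = beta b -> exists c, p c = a /\ q c = b.

Definition pullback_ip (c d : C) : R :=
  ipA (p c) (p d) + ipB (q c) (q d) - ipX (alpha (p c)) (alpha (p d)).

Lemma pullback_ip_swap c d :
  pullback_ip c d =
  ipB (q c) (q d) + ipA (p c) (p d) - ipX (beta (q c)) (beta (q d)).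
Proof. by rewrite /pullback_ip !square (addrC (ipA _ _)). Qed.

(* When p and q are jointly injective, pullback_ip is an inner product;
   positivity uses that alpha does not increase lengths. *)
Lemma pullback_ip_is_inner_product :
  riemannian_submersion ipA ipX alpha ->
  (forall c, p c = 0 -> q c = 0 -> c = 0) ->
  is_inner_product pullback_ip.
Proof.
move=> halpha inj.
case: (hipA) => linA symA _; case: (hipB) => linB symB _.
case: (hipX) => linX symX _.
split=> [k u v w|u v|c nz_c]; rewrite /pullback_ip.
- by rewrite !linearP linA linB linX; ring.
- by rewrite symA symB symX.
have [qc0|nz_qc] := eqVneq (q c) 0.
  have nz_pc : p c != 0 by apply: contra_neq nz_c => pc0; exact: inj.
  by rewrite square qc0 linear0 ip0l // !ip0r // addr0 subr0 ip_gt0.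
rewrite addrAC; apply: ltr_wpDl; last exact: ip_gt0.
by rewrite subr_ge0; apply: submersion_norm_le.
Qed.

(* The projection p is a Riemannian submersion for pullback_ip.  Horizontal
   vectors of p project by q to horizontal vectors of beta, so there the
   B- and X-terms of pullback_ip cancel. *)
Lemma pullback_projection_submersion :
  riemannian_submersion ipB ipX beta ->
  riemannian_submersion pullback_ip ipA p.
Proof.
move=> [_ beta_surj beta_iso beta_lift].
have alpha0 : alpha 0 = 0 by rewrite linear0.
have on_kernel c k : p k = 0 -> pullback_ip c k = ipB (q c) (q k).
  by move=> pk; rewrite /pullback_ip pk alpha0 !ip0r // add0r subr0.
have q_horizontal c : in_ker_perp pullback_ip p c -> in_ker_perp ipB beta (q c).
  move=> pc b bb; have /lift [k [pk qk]] : alpha 0 = beta b by rewrite bb.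
  by rewrite -qk -on_kernel ?pc.
split.
- exact: linearP.
- move=> a; have [b eb] := beta_surj (alpha a).
  by have [c [pc _]] := lift (esym eb); exists c.
- move=> u v pu pv; rewrite /pullback_ip !square.
  by rewrite (beta_iso _ _ (q_horizontal _ pu) (q_horizontal _ pv)) addrK.
- move=> a; have [b pb eb] := beta_lift (alpha a).
  have [c [pc qc]] := lift (esym eb).
  exists c => // k pk; rewrite on_kernel // qc pb //.
  by rewrite -square pk linear0.
Qed.

End PullbackInnerProduct.

Section FiberProduct.
Variables (R : fieldType) (A B X : vectType R).
Variables (alpha : {linear A -> X}) (beta : {linear B -> X}).

Definition fiber_map (ab : A * B) : X := alpha ab.1 - beta ab.2.

Lemma fiber_map_linear : linear fiber_map.
Proof.
move=> k u v; rewrite /fiber_map /= [alpha _]linearP [beta _]linearP.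
by rewrite scalerBr opprD addrACA -scalerN.
Qed.

HB.instance Definition _ :=
  GRing.isLinear.Build R (A * B)%type X *:%R fiber_map fiber_map_linear.

Lemma mem_fiber_space a b : ((a, b) \in fiber_space alpha beta) = (alpha a == beta b).
Proof.
by rewrite memv_ker (lfunE (fiber_map : {linear _ -> _})) subr_eq0.
Qed.

Lemma proj_A_linear : linear (proj_A alpha beta).
Proof. by move=> k u v; rewrite /proj_A linearP. Qed.

Lemma proj_B_linear : linear (proj_B alpha beta).
Proof. by move=> k u v; rewrite /proj_B linearP. Qed.

HB.instance Definition _ :=
  GRing.isLinear.Build R (fiber_prod alpha beta) A *:%R
    (proj_A alpha beta) proj_A_linear.
HB.instance Definition _ :=
  GRing.isLinear.Build R (fiber_prod alpha beta) B *:%R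
    (proj_B alpha beta) proj_B_linear.

Lemma fiber_square c : alpha (proj_A alpha beta c) = beta (proj_B alpha beta c).
Proof.
apply/eqP; rewrite -mem_fiber_space /proj_A /proj_B.
by case: (vsval c) (subvsP c).
Qed.

Lemma fiber_lift a b : alpha a = beta b ->
  exists c, proj_A alpha beta c = a /\ proj_B alpha beta c = b.
Proof.
move=> e; have mem : (a, b) \in fiber_space alpha beta by rewrite mem_fiber_space e.
by exists (vsproj (fiber_space alpha beta) (a, b)); rewrite /proj_A /proj_B vsprojK.
Qed.

Lemma fiber_proj_inj c :
  proj_A alpha beta c = 0 -> proj_B alpha beta c = 0 -> c = 0.
Proof.
rewrite /proj_A /proj_B => a0 b0; apply: (@subvs_inj _ _ (fiber_space alpha beta)).
by rewrite raddf0; case: (vsval c) a0 b0 => /= ? ? -> ->.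
Qed.

End FiberProduct.

Theorem lemma2p6 (R : realFieldType) (A B X : vectType R)
  (ipA : A -> A -> R) (ipB : B -> B -> R) (ipX : X -> X -> R)
  (hipA : is_inner_product ipA) (hipB : is_inner_product ipB)
  (hipX : is_inner_product ipX)
  (alpha : {linear A -> X}) (beta : {linear B -> X})
  (halpha : riemannian_submersion ipA ipX alpha)
  (hbeta : riemannian_submersion ipB ipX beta) :
  exists ipC : fiber_prod alpha beta -> fiber_prod alpha beta -> R,
    [/\ is_inner_product ipC,
        riemannian_submersion ipC ipA (proj_A alpha beta)
      & riemannian_submersion ipC ipB (proj_B alpha beta)].
Proof.
pose pA : {linear fiber_prod alpha beta -> A} := proj_A alpha beta.
pose pB : {linear fiber_prod alpha beta -> B} := proj_B alpha beta.
have square := @fiber_square _ _ _ _ alpha beta.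
have lift := @fiber_lift _ _ _ _ alpha beta.
have square' c : beta (pB c) = alpha (pA c) by rewrite square.
have lift' b a : beta b = alpha a -> exists c, pB c = b /\ pA c = a.
  by move=> e; have [c [ca cb]] := lift a b (esym e); exists c.
exists (pullback_ip ipA ipB ipX pA pB alpha); split.
- exact: pullback_ip_is_inner_product hipA hipB hipX square halpha
    (@fiber_proj_inj _ _ _ _ alpha beta).
- exact: pullback_projection_submersion hipA hipX square lift hbeta.
- have := pullback_projection_submersion hipB hipX square' lift' halpha.
  apply: riemannian_submersion_ext => c d.
  by rewrite (pullback_ip_swap _ _ _ square).
Qed.
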